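(* Let $\mathfrak{R}=(G,G',S,\phi,\rho,\delta)$ be a reconciliation and $x,y\in V(G')$ with $x<y$ and $\rho(x)=\rho(y)$. Then $y\in\Delta(\mathfrak{R})$.
   Context: All trees are rooted binary trees whose root node has degree 1; every other non-leaf node $x$ has exactly two children $x_l,x_r$. For nodes of a rooted tree, $y\le x$ means $x$ lies on the path from $y$ to the root; $y<x$ means $y\le x$, $y\ne x$. $G$ is a gene tree, $S$ a species tree, $\phi:L(G)\to L(S)$. A tree $G'$ is an extension of $G$ if $G$ is obtained from $G'$ by pruning some subtrees and suppressing degree-2 nodes. A map $\rho:V(G')\to V(S)$ is consistent with $S$ if $\rho(root(G'))=root(S)$ and every node $x$ of $G'$ with two children satisfies (D) $\rho(x)=\rho(x_l)=\rho(x_r)$ or (S) $\rho(x)_l=\rho(x_l)$ and $\rho(x)_r=\rho(x_r)$. A reconciliation $(G,G',S,\phi,\rho,\delta)$ consists of an extension $G'$ of $G$, a consistent $\rho$ with $\rho|_{L(G)}=\phi$, and an injective partial function $\delta$ from duplications to losses ($L(G')\setminus L(G)$) with $\rho(x)=\rho(\delta(x))$. $\Delta(\mathfrak{R})$ (duplications) is the set of nodes with two children satisfying (D). *)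

From mathcomp Require Import all_boot.
Set Implicit Arguments. Unset Strict Implicit. Unset Printing Implicit Defensive.

Record rtree := RTree {
  node : finType;
  root : node;
  parent : node -> option node }.
Arguments root : clear implicits.
Arguments parent : clear implicits.

Section Trees.
Variable T : rtree.

Definition children (x : node T) : seq (node T) :=
  [seq y <- enum (node T) | parent T y == Some x].

Definition is_leaf (x : node T) : Prop := children x = [::].

(* y <= x : x lies on the path from y to the root *)
Definition anc_le (y x : node T) : Prop :=
  exists n, iter n (fun o => obind (parent T) o) (Some y) = Some x.

Definition anc_lt (y x : node T) : Prop := anc_le y x /\ y <> x.

Definition is_rbtree : Prop :=
  [/\ parent T (root T) = None,
      (forall x, anc_le x (root T)),
      size (children (root T)) = 1 &
      (forall x, x <> root T -> size (children x) = 0 \/ size (children x) = 2)].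

Definition left_child (x : node T) : node T := nth x (children x) 0.
Definition right_child (x : node T) : node T := nth x (children x) 1.
Definition has_two_children (x : node T) : Prop := size (children x) = 2.

End Trees.

(* Nodes of T' retained when restricting T' to the leaf set X: the leaves in X,
   the root, and the nodes having (at least) two children above some X-leaf. *)
Definition kept (T' : rtree) (X : node T' -> Prop) (v : node T') : Prop :=
  X v \/ v = root T' \/
  exists c1 c2, [/\ c1 <> c2, parent T' c1 = Some v, parent T' c2 = Some v,
    (exists l, X l /\ anc_le l c1) & (exists l, X l /\ anc_le l c2)].

Definition leaf_image (G G' : rtree) (iota : node G -> node G') (w : node G') : Prop :=
  exists v, is_leaf v /\ iota v = w.

(* G' is an extension of G via the embedding iota: G is obtained from G' by
   pruning the subtrees containing no leaf of iota(L(G)) and suppressing the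
   resulting degree-2 nodes, i.e. iota is an ancestor-order isomorphism from G
   onto the retained nodes of G' for the leaf set iota(L(G)) ⊆ L(G'). *)
Definition is_extension (G G' : rtree) (iota : node G -> node G') : Prop :=
  [/\ injective iota,
      (forall v, is_leaf v -> is_leaf (iota v)),
      (forall w, kept (leaf_image iota) w <-> exists v, iota v = w) &
      (forall a b, anc_le a b <-> anc_le (iota a) (iota b))].

Definition cond_D (G' S : rtree) (rho : node G' -> node S) (x : node G') : Prop :=
  rho x = rho (left_child x) /\ rho x = rho (right_child x).

Definition cond_S (G' S : rtree) (rho : node G' -> node S) (x : node G') : Prop :=
  perm_eq (children (rho x)) [:: rho (left_child x); rho (right_child x)].

Definition consistent (G' S : rtree) (rho : node G' -> node S) : Prop :=
  rho (root G') = root S /\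
  forall x, has_two_children x -> cond_D rho x \/ cond_S rho x.

Definition is_dup (G' S : rtree) (rho : node G' -> node S) (x : node G') : Prop :=
  has_two_children x /\ cond_D rho x.

Definition is_loss (G G' : rtree) (iota : node G -> node G') (w : node G') : Prop :=
  is_leaf w /\ ~ leaf_image iota w.

Definition is_reconciliation (G G' S : rtree) (phi : node G -> node S)
    (rho : node G' -> node S) (delta : node G' -> option (node G')) : Prop :=
  [/\ is_rbtree G, is_rbtree G', is_rbtree S,
      (forall v, is_leaf v -> is_leaf (phi v)) &
      exists iota : node G -> node G',
      [/\ is_extension iota,
          consistent rho,
          (forall v, is_leaf v -> rho (iota v) = phi v),
          (forall x l, delta x = Some l ->
              [/\ is_dup rho x, is_loss iota l & rho x = rho l]) &
          (forall x1 x2 l, delta x1 = Some l -> delta x2 = Some l -> x1 = x2)]].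

From Pilot Require Import Defs.
From mathcomp Require Import all_boot.
Set Implicit Arguments. Unset Strict Implicit. Unset Printing Implicit Defensive.

(* Along a path x <= c -> y in G', rho is monotone, so rho x = rho y forces
   rho y <= rho c <= rho y.  If y had type (S), rho c would be a child of
   rho y lying above it, a cycle in S.  The root of G' (which has one child)
   is excluded separately: its child c would satisfy rho c = root S, and then
   every descendant of c, including the image of a leaf of G, would be mapped
   to the root of S, which is not a leaf. *)

Section Ancestors.
Variable T : rtree.
Implicit Types a b c p z : node T.

Lemma iter_parent_None n :
  iter n (fun o => obind (parent T) o) None = None.
Proof. by elim: n => //= n ->. Qed.

Lemma anc_le_refl a : anc_le a a.
Proof. by exists 0. Qed.

Lemma anc_le_trans a b c : anc_le a b -> anc_le b c -> anc_le a c.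
Proof. by case=> n h1 [m h2]; exists (m + n); rewrite iterD h1. Qed.

Lemma anc_le_parent z p : parent T z = Some p -> anc_le z p.
Proof. by move=> e; exists 1; rewrite /= e. Qed.

Lemma anc_le_ind (P : node T -> Prop) b :
  P b -> (forall a p, parent T a = Some p -> anc_le p b -> P p -> P a) ->
  forall a, anc_le a b -> P a.
Proof.
move=> Pb IH a [n]; elim: n a => [a [->] //|n IHn a].
rewrite iterSr /=; case e: (parent T a) => [p|]; last by rewrite iter_parent_None.
by move=> h; apply: IH e (ex_intro _ n h) (IHn p h).
Qed.

Lemma anc_lt_parent a b :
  anc_lt a b -> exists2 c, anc_le a c & parent T c = Some b.
Proof.
case=> [[[|n]]]; first by case.
rewrite iterS; case e: (iter n _ (Some a)) => [c|] //= hc _.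
by exists c => //; exists n.
Qed.

Lemma mem_children z p : (z \in children p) = (parent T z == Some p).
Proof. by rewrite mem_filter mem_enum andbT. Qed.

Lemma children_two p :
  has_two_children p -> children p = [:: left_child p; right_child p].
Proof.
by rewrite /has_two_children /left_child /right_child; case: children => [|? [|? []]].
Qed.

End Ancestors.

Section RootedTree.
Variable T : rtree.
Hypothesis root_parent : parent T (Defs.root T) = None.
Hypothesis anc_le_root : forall a, anc_le a (Defs.root T).
Implicit Types a b c p z : node T.

Lemma anc_le_rootE b : anc_le (Defs.root T) b -> b = Defs.root T.
Proof.
by case=> [[[]//|n]]; rewrite iterSr /= root_parent iter_parent_None.
Qed.

Lemma parent_neq_root z p : parent T z = Some p -> z <> Defs.root T.
Proof. by move=> e ez; rewrite ez root_parent in e. Qed.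

Lemma anc_le_neq_root a b : anc_le a b -> b <> Defs.root T -> a <> Defs.root T.
Proof. by move=> + ne_b ea; rewrite ea => /anc_le_rootE. Qed.

Definition depth a : nat :=
  ex_minn (let: ex_intro n h := anc_le_root a in ex_intro _ n (introT eqP h)).

Lemma depth_parent_lt z p : parent T z = Some p -> depth p < depth z.
Proof.
move=> e; rewrite {2}/depth; case: ex_minnP => [[|n]] /eqP hz _.
  by move: e; case: hz => ->; rewrite root_parent.
rewrite /depth; case: ex_minnP => m _ min_m; apply: min_m.
by move: hz; rewrite iterSr /= e => ->.
Qed.

Lemma depth_anc_le a b : anc_le a b -> depth b <= depth a.
Proof.
apply: (@anc_le_ind _ (fun a => depth b <= depth a)) => //.
move=> z p /depth_parent_lt lt_pz _ le_bp; exact: leq_trans le_bp (ltnW lt_pz).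
Qed.

Lemma parent_nanc_le a b : parent T b = Some a -> ~ anc_le a b.
Proof. by move=> /depth_parent_lt lt_ab /depth_anc_le; rewrite leqNgt lt_ab. Qed.

Lemma exists_leaf : exists z, is_leaf z.
Proof.
have [z _ z_max] := @arg_maxnP (node T) (Defs.root T) predT depth isT.
exists z; rewrite /is_leaf; case e: (children z) => [|c s] //.
have : c \in children z by rewrite e mem_head.
rewrite mem_children => /eqP /depth_parent_lt.
by move=> /leq_trans/(_ (z_max c isT)); rewrite ltnn.
Qed.

End RootedTree.

Section BinaryTree.
Variable T : rtree.
Hypothesis T_rbtree : is_rbtree T.
Implicit Types a c p z : node T.

Lemma parent_has_two_children z p :
  parent T z = Some p -> p <> Defs.root T -> has_two_children p.
Proof.
case: T_rbtree => _ _ _ arity e /arity [] // no_child.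
by move: (mem_children z p); rewrite e eqxx; case: children no_child.
Qed.

Lemma root_not_leaf : ~ is_leaf (Defs.root T).
Proof. by rewrite /is_leaf; case: T_rbtree => _ _ + _ => /[swap] ->. Qed.

Lemma anc_le_child_of_root a c :
  parent T c = Some (Defs.root T) -> a <> Defs.root T -> anc_le a c.
Proof.
case: T_rbtree => _ anc_le_root one_child _ e_c ne_a.
have [c' le_ac' e_c'] := anc_lt_parent (conj (anc_le_root a) ne_a).
suff -> : c = c' by [].
move: (mem_children c (Defs.root T)) (mem_children c' (Defs.root T)).
rewrite e_c e_c' eqxx; case: children one_child => [|d []] //= _.
by rewrite !inE => /eqP -> /eqP ->.
Qed.

End BinaryTree.

Section Consistent.
Variables (G' S : rtree) (rho : node G' -> node S).
Hypotheses (G'_rbtree : is_rbtree G') (S_rbtree : is_rbtree S).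
Hypothesis rho_consistent : consistent rho.
Implicit Types a b c p z : node G'.

Let G'_root_parent : parent G' (Defs.root G') = None.
Proof. by case: G'_rbtree. Qed.

Lemma rho_parent z p :
  parent G' z = Some p -> has_two_children p ->
  (cond_D rho p /\ rho z = rho p) \/
  (cond_S rho p /\ parent S (rho z) = Some (rho p)).
Proof.
move=> e two_p; have : z \in children p by rewrite mem_children e.
rewrite children_two // !inE => z_lr.
case: rho_consistent => _ /(_ p two_p) [[lD rD]|hS]; [left|right]; split => //.
  by case/orP: z_lr => /eqP ->.
apply/eqP; rewrite -mem_children (perm_mem hS) !inE.
by case/orP: z_lr => /eqP ->; rewrite eqxx ?orbT.
Qed.

Lemma rho_anc_le a b :
  anc_le a b -> b <> Defs.root G' -> anc_le (rho a) (rho b).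
Proof.
move=> + ne_b; apply: (@anc_le_ind _ (fun a => anc_le (rho a) (rho b))).
  exact: anc_le_refl.
move=> z p e le_pb le_rho_pb; apply: anc_le_trans le_rho_pb.
have ne_p := anc_le_neq_root G'_root_parent le_pb ne_b.
have [[_ ->]|[_ e_rho]] := rho_parent e (parent_has_two_children G'_rbtree e ne_p).
  exact: anc_le_refl.
exact: anc_le_parent.
Qed.

Lemma rho_eq_root_anc_le a c :
  anc_le a c -> c <> Defs.root G' -> rho c = Defs.root S -> rho a = Defs.root S.
Proof.
move=> + ne_c rho_c; apply: (@anc_le_ind _ (fun a => rho a = Defs.root S)) => //.
move=> z p e le_pc rho_p; have ne_p := anc_le_neq_root G'_root_parent le_pc ne_c.
have [[_ ->] //|[S_p _]] := rho_parent e (parent_has_two_children G'_rbtree e ne_p).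
by move: (perm_size S_p); rewrite rho_p; case: S_rbtree => _ _ ->.
Qed.

End Consistent.

Lemma rho_child_of_root_neq (G G' S : rtree) (phi : node G -> node S)
    (rho : node G' -> node S) (delta : node G' -> option (node G')) c :
  is_reconciliation phi rho delta ->
  parent G' c = Some (Defs.root G') -> rho c <> Defs.root S.
Proof.
case=> G_rbtree G'_rbtree S_rbtree phi_leaf.
case=> iota [[_ iota_leaf _ _] rho_cons rho_iota _ _].
move=> e_c rho_c; have [G_root_parent G_anc_le_root _ _] := G_rbtree.
have [v leaf_v] := exists_leaf G_root_parent G_anc_le_root.
have ne_iv : iota v <> Defs.root G'.
  by move=> e; apply: (root_not_leaf G'_rbtree); rewrite -e; apply: iota_leaf.
have ne_c : c <> Defs.root G' by apply: parent_neq_root e_c; case: G'_rbtree.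
have := rho_eq_root_anc_le G'_rbtree S_rbtree rho_cons
  (anc_le_child_of_root G'_rbtree e_c ne_iv) ne_c rho_c.
rewrite rho_iota // => phi_v.
by apply: (root_not_leaf S_rbtree); rewrite -phi_v; apply: phi_leaf.
Qed.

Theorem lemma4 (G G' S : rtree) (phi : node G -> node S)
    (rho : node G' -> node S) (delta : node G' -> option (node G'))
    (x y : node G') :
  is_reconciliation phi rho delta ->
  anc_lt x y -> rho x = rho y ->
  is_dup rho y.
Proof.
move=> rec lt_xy rho_xy; have [_ G'_rbtree S_rbtree _ [_ [_ rho_cons _ _ _]]] := rec.
have [G'_root_parent _ _ _] := G'_rbtree.
have [S_root_parent S_anc_le_root _ _] := S_rbtree.
have [c le_xc e_c] := anc_lt_parent lt_xy.
have ne_c := parent_neq_root G'_root_parent e_c.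
have le_yc : anc_le (rho y) (rho c) by rewrite -rho_xy; exact: rho_anc_le.
have [y_root|/eqP ne_y] := eqVneq y (Defs.root G').
  have rho_c : rho c = Defs.root S.
    by apply: anc_le_rootE => //; rewrite -(proj1 rho_cons) -y_root.
  by rewrite y_root in e_c; case: (rho_child_of_root_neq rec e_c rho_c).
have two_y := parent_has_two_children G'_rbtree e_c ne_y.
have [[D_y _]|[_ e_rho]] := rho_parent rho_cons e_c two_y; first by split.
by case: (parent_nanc_le S_root_parent S_anc_le_root e_rho).
Qed.
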